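(* Let $G$ be a connected graph in $\mathcal{C}$ and $C$ an induced $C_5$ in $G$ with vertices $0,\dots,4$ in cyclic order. If $R\neq\emptyset$, then $|X_i|\le 2$ for every $i$.
   Context: $\mathcal{C}=\mathrm{Free}(\text{claw}, 4K_1, \text{5-wheel}, C_5\text{-twin}, P_5\text{-twin}, K_5-e)$, where $\mathrm{Free}(L)$ is the class of graphs with no induced subgraph isomorphic to a member of $L$; the claw is $K_{1,3}$; $4K_1$ is the edgeless graph on 4 vertices; the 5-wheel is $C_5$ plus a vertex adjacent to all five cycle vertices; the $C_5$-twin is $C_5$ plus a new vertex adjacent to one cycle vertex $v$ and both cycle-neighbours of $v$; the $P_5$-twin is a path $p_1p_2p_3p_4p_5$ plus a new vertex adjacent to exactly $p_2,p_3,p_4$; $K_5-e$ is $K_5$ minus one edge. Given an induced cycle $C$ of length 5 with vertices $0,\dots,4$ in cyclic order (indices taken mod 5): $R$ is the set of vertices outside $C$ with no neighbour in $C$; $X_j$ is the set of vertices outside $C$ whose neighbourhood in $C$ is exactly $\{j,j+1\}$; $Y_j$ is the set of vertices outside $C$ whose neighbourhood in $C$ is exactly $\{j,j+1,j+2,j+3\}$; $X=\bigcup_j X_j$, $Y=\bigcup_j Y_j$. *)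

From mathcomp Require Import all_boot.
Set Implicit Arguments. Unset Strict Implicit. Unset Printing Implicit Defensive.

Definition induced_sub (n : nat) (h : rel 'I_n) (T : finType) (e : rel T) : Prop :=
  exists f : 'I_n -> T, injective f /\ forall i j, e (f i) (f j) = h i j.

Definition cyc5 (i j : nat) : bool := (j == (i + 1) %% 5) || (i == (j + 1) %% 5).

Definition claw : rel 'I_4 := fun i j =>
  (i != j) && (((i : nat) == 0) || ((j : nat) == 0)).
Definition fourK1 : rel 'I_4 := fun _ _ => false.
Definition wheel5 : rel 'I_6 := fun i j =>
  if ((i : nat) < 5) && ((j : nat) < 5) then cyc5 i j
  else (i != j).
(* C5-twin: cycle on 0..4, vertex 5 adjacent to 0 and its cycle-neighbours 1, 4 *)
Definition c5twin : rel 'I_6 := fun i j =>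
  if ((i : nat) < 5) && ((j : nat) < 5) then cyc5 i j
  else if (i : nat) == 5 then (j : nat) \in [:: 0; 1; 4]
  else (i : nat) \in [:: 0; 1; 4].
Definition p5twin : rel 'I_6 := fun i j =>
  if ((i : nat) < 5) && ((j : nat) < 5) then ((j : nat) == i.+1) || ((i : nat) == j.+1)
  else if (i : nat) == 5 then (j : nat) \in [:: 1; 2; 3]
  else (i : nat) \in [:: 1; 2; 3].
Definition k5e : rel 'I_5 := fun i j =>
  (i != j) && ~~ ((((i : nat) == 0) && ((j : nat) == 1)) || (((i : nat) == 1) && ((j : nat) == 0))).

Definition in_classC (T : finType) (e : rel T) : Prop :=
  ~ induced_sub claw e /\ ~ induced_sub fourK1 e /\ ~ induced_sub wheel5 e /\
  ~ induced_sub c5twin e /\ ~ induced_sub p5twin e /\ ~ induced_sub k5e e.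

Definition simple_graph (T : finType) (e : rel T) : Prop := symmetric e /\ irreflexive e.
Definition connected (T : finType) (e : rel T) : Prop := forall x y, connect e x y.

Definition induced_C5 (T : finType) (e : rel T) (c : 'I_5 -> T) : Prop :=
  injective c /\ forall i j : 'I_5, e (c i) (c j) = cyc5 i j.

Definition outside (T : finType) (c : 'I_5 -> T) (v : T) : bool :=
  [forall k : 'I_5, c k != v].

Definition Rset (T : finType) (e : rel T) (c : 'I_5 -> T) : {set T} :=
  [set v | outside c v && [forall k : 'I_5, ~~ e v (c k)]].

Definition Xset (T : finType) (e : rel T) (c : 'I_5 -> T) (j : 'I_5) : {set T} :=
  [set v | outside c v &&
     [forall k : 'I_5, e v (c k) == (((k : nat) == j) || ((k : nat) == ((j : nat) + 1) %% 5))]].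

From mathcomp Require Import all_boot.

Set Implicit Arguments.
Unset Strict Implicit.
Unset Printing Implicit Defensive.

(* Put p := i, s := i+2, t := i+4 on the cycle and let r be in R.  Every
   x in X_i is adjacent to p and to neither s nor t.  As {r, s, t} is stable,
   4K_1-freeness forces r to see every vertex of X_i; as p sees t but no
   vertex of X_i does, claw-freeness at p makes X_i a clique.  Three vertices
   of X_i would then form a triangle complete to the non-adjacent pair p, r,
   i.e. an induced K_5 - e. *)

Section ForbiddenSubgraphs.

Variables (T : finType) (e : rel T).
Hypotheses (esym : symmetric e) (eirr : irreflexive e).

Lemma induced_sub_nth n (h : rel 'I_n) (s : seq T) x0 :
  size s = n -> uniq s ->
  (forall i j : 'I_n, e (nth x0 s i) (nth x0 s j) = h i j) -> induced_sub h e.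
Proof.
move=> size_s uniq_s s_h; exists (fun i : 'I_n => nth x0 s i); split => // i j.
by move/eqP; rewrite nth_uniq ?size_s // => /eqP /val_inj.
Qed.

Lemma adj_neq u v : e u v -> u != v.
Proof. by apply: contraTneq => ->; rewrite eirr. Qed.

Lemma neq_adj_nonadj w u v : e u w -> ~~ e v w -> u != v.
Proof. by move=> euw; apply: contraNneq => <-. Qed.

Ltac solve_edge :=
  match goal with
  | |- e ?a ?a = _ => by rewrite eirr
  | H : is_true (e ?a ?b) |- e ?a ?b = _ => by rewrite H
  | H : is_true (e ?b ?a) |- e ?a ?b = _ => by rewrite esym H
  | H : is_true (~~ e ?a ?b) |- e ?a ?b = _ => by rewrite (negbTE H)
  | H : is_true (~~ e ?b ?a) |- e ?a ?b = _ => by rewrite esym (negbTE H)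
  end.

Ltac solve_neq :=
  match goal with
  | H : is_true (?a != ?b) |- is_true (?a != ?b) => exact: H
  | H : is_true (?b != ?a) |- is_true (?a != ?b) => by rewrite eq_sym
  | H : is_true (e ?a ?b) |- is_true (?a != ?b) => exact: adj_neq H
  | H : is_true (e ?b ?a) |- is_true (?a != ?b) => by rewrite eq_sym; apply: adj_neq H
  end.

Ltac solve_uniq := rewrite /= !inE !negb_or ?andbT; repeat (apply/andP; split); solve_neq.

Lemma fourK1_free_adj r s t x :
  ~ induced_sub fourK1 e -> uniq [:: r; x; s; t] ->
  ~~ e r s -> ~~ e r t -> ~~ e s t -> ~~ e x s -> ~~ e x t -> e r x.
Proof.
move=> fourK1F uniq_rxst ers ert est exs ext; apply: contra_notT fourK1F => erx.
apply: (@induced_sub_nth 4 _ [:: r; x; s; t] r) => //.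
by move=> [[|[|[|[|?]]]] ?] [[|[|[|[|?]]]] ?] //=; solve_edge.
Qed.

Lemma claw_free_adj p t x y :
  ~ induced_sub claw e -> uniq [:: t; x; y] ->
  e p t -> e p x -> e p y -> ~~ e t x -> ~~ e t y -> e x y.
Proof.
rewrite /= !inE !negb_or => clawF /and3P [/andP [ntx nty] nxy _].
move=> ept epx epy etx ety; apply: contra_notT clawF => exy.
apply: (@induced_sub_nth 4 _ [:: p; t; x; y] p) => //; first by solve_uniq.
by move=> [[|[|[|[|?]]]] ?] [[|[|[|[|?]]]] ?] //=; solve_edge.
Qed.

Lemma k5e_free_no_triangle p r a b c :
  ~ induced_sub k5e e -> p != r -> ~~ e p r ->
  e a b -> e b c -> e c a -> e p a -> e p b -> e p c -> e r a -> e r b -> e r c ->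
  False.
Proof.
move=> k5eF npr epr eab ebc eca epa epb epc era erb erc; apply: k5eF.
apply: (@induced_sub_nth 5 _ [:: p; r; a; b; c] p) => //; first by solve_uniq.
by move=> [[|[|[|[|[|?]]]]] ?] [[|[|[|[|[|?]]]]] ?] //=; solve_edge.
Qed.

Lemma card_le2_nbhd_avoiding p s t r (X : {set T}) :
  ~ induced_sub claw e -> ~ induced_sub fourK1 e -> ~ induced_sub k5e e ->
  e p t -> ~~ e s t -> ~~ e r p -> ~~ e r s -> ~~ e r t -> uniq [:: r; s; t] ->
  {in X, forall x, [/\ e x p, ~~ e x s, ~~ e x t, x != s & x != t]} ->
  #|X| <= 2.
Proof.
move=> clawF fourK1F k5eF ept est erp ers ert.
rewrite /= !inE !negb_or => /and3P [/andP [nrs nrt] nst _] X_nbhd.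
have r_adjX : {in X, forall x, e r x}.
  move=> x /X_nbhd [exp exs ext nxs nxt].
  have nrx := neq_adj_nonadj exp erp.
  by apply: (fourK1_free_adj (s := s) (t := t)) => //; solve_uniq.
have X_clique : {in X &, forall x y, x != y -> e x y}.
  move=> x y /X_nbhd [exp _ ext _ nxt] /X_nbhd [eyp _ eyt _ nyt] nxy.
  by apply: (claw_free_adj (p := p) (t := t)) => //; rewrite 1?esym //; solve_uniq.
rewrite leqNgt; apply/negP => /card_gt2P [a [b [c [[Xa Xb Xc] [nab nbc nca]]]]].
have [eap _ _ _ _] := X_nbhd a Xa; have [ebp _ _ _ _] := X_nbhd b Xb.
have [ecp _ _ _ _] := X_nbhd c Xc.
have npr : p != r := neq_adj_nonadj ept ert.
have epr : ~~ e p r by rewrite esym.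
apply: (k5e_free_no_triangle k5eF npr epr (X_clique a b Xa Xb nab)
          (X_clique b c Xb Xc nbc) (X_clique c a Xc Xa nca));
  by rewrite ?r_adjX // esym.
Qed.

End ForbiddenSubgraphs.

Definition cshift (i : 'I_5) (k : nat) : 'I_5 := Ordinal (@ltn_pmod (i + k) 5 isT).

Lemma cyc5_cshift (i : 'I_5) :
  [/\ cyc5 i (cshift i 4), ~~ cyc5 (cshift i 2) (cshift i 4) & cshift i 2 != cshift i 4].
Proof. by case: i => [[|[|[|[|[|//]]]]] ?]. Qed.

Section InducedC5.

Variables (T : finType) (e : rel T) (c : 'I_5 -> T).

Lemma Rset_nbhd r k : r \in Rset e c -> c k != r /\ ~~ e r (c k).
Proof. by rewrite inE => /andP [/forallP r_out /forallP r_nadj]. Qed.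

Lemma Xset_nbhd i x : x \in Xset e c i ->
  [/\ e x (c i), ~~ e x (c (cshift i 2)), ~~ e x (c (cshift i 4)),
      x != c (cshift i 2) & x != c (cshift i 4)].
Proof.
rewrite inE => /andP [/forallP x_out /forallP x_adj].
rewrite !(eq_sym x) !x_out !(eqP (x_adj _)) eqxx /=.
by case: i {x_adj} => [[|[|[|[|[|//]]]]] ?].
Qed.

End InducedC5.

Theorem claim14 (T : finType) (e : rel T) (c : 'I_5 -> T) :
  simple_graph e -> in_classC e -> connected e -> induced_C5 e c ->
  Rset e c != set0 ->
  forall i : 'I_5, #|Xset e c i| <= 2.
Proof.
move=> [esym eirr] [clawF [fourK1F [_ [_ [_ k5eF]]]]] _ [c_inj c_adj] /set0Pn [r Rr] i.
have [ept nest nst] := cyc5_cshift i; rewrite -!c_adj in ept nest.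
have nrc k := Rset_nbhd k Rr.
apply: (card_le2_nbhd_avoiding esym eirr (p := c i) (s := c (cshift i 2))
          (t := c (cshift i 4)) (r := r)) => //.
- by case: (nrc i).
- by case: (nrc (cshift i 2)).
- by case: (nrc (cshift i 4)).
- rewrite /= !inE !negb_or !(eq_sym r) (inj_eq c_inj) nst.
  by case: (nrc (cshift i 2)) => -> _; case: (nrc (cshift i 4)) => -> _.
- exact: Xset_nbhd.
Qed.
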